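(* Let $n$ and $m$ be integers with $n\geq 5$ and $m\geq 5$. For each $G\in T_{n,m}$ whose terminals are not true twins, there exists $H\in T_{n,m}$ whose terminals are true twins and which is $3$-stronger than $G$.
   Context: All graphs are finite, simple and undirected. A two-terminal graph is a graph $G$ together with two distinguished vertices $s,t$ (the terminals). $T_{n,m}$ denotes the set of all pairwise nonisomorphic (with isomorphisms preserving the set of terminals) two-terminal graphs with $n$ vertices and $m$ edges. Two vertices $u,v$ are true twins if their closed neighborhoods coincide, $N[u]=N[v]$ (in particular they are adjacent). For a positive integer $d$, a $d$-pathset of a two-terminal graph $G$ is a spanning subgraph of $G$ containing a path of length (number of edges) at most $d$ joining $s$ and $t$; $N_i^d(G)$ is the number of $d$-pathsets of $G$ with exactly $i$ edges. For $G,H\in T_{n,m}$, $H$ is $d$-stronger than $G$ if $N_i^d(H)\geq N_i^d(G)$ for every $i\in\{1,\ldots,m\}$ and $N_j^d(H)>N_j^d(G)$ for some $j\in\{1,\ldots,m\}$. *)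

From mathcomp Require Import all_boot.
Set Implicit Arguments. Unset Strict Implicit. Unset Printing Implicit Defensive.

(* A simple graph on vertex set 'I_n is given by its edge set: a set of
   2-element subsets of 'I_n. A two-terminal graph is such a graph with two
   distinct distinguished vertices s, t. *)
Definition is_graph (n : nat) (E : {set {set 'I_n}}) : Prop :=
  forall e, e \in E -> #|e| = 2.

Definition adj (n : nat) (E : {set {set 'I_n}}) : rel 'I_n :=
  fun u v => [set u; v] \in E.

Definition closed_nbhd (n : nat) (E : {set {set 'I_n}}) (u : 'I_n) : {set 'I_n} :=
  u |: [set v | adj E u v].

Definition true_twins (n : nat) (E : {set {set 'I_n}}) (u v : 'I_n) : Prop :=
  closed_nbhd E u = closed_nbhd E v.

(* F contains a path of length (number of edges) at most d joining s and t:
   a sequence of pairwise distinct vertices s = v0, v1, ..., vk = t, k <= d,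
   with consecutive vertices adjacent in F (the sequence p = [v1; ...; vk]). *)
Definition has_short_path (n : nat) (d : nat) (F : {set {set 'I_n}}) (s t : 'I_n) : bool :=
  [exists k : 'I_d.+1, exists p : k.-tuple 'I_n,
    [&& path (adj F) s p, uniq (s :: p) & last s p == t]].

(* N_i^d(G): number of d-pathsets (spanning subgraphs, identified with edge
   subsets) of G = (E, s, t) with exactly i edges. *)
Definition Npath (n : nat) (d : nat) (E : {set {set 'I_n}}) (s t : 'I_n) (i : nat) : nat :=
  #|[set F in powerset E | (#|F| == i) && has_short_path d F s t]|.

Definition stronger (n : nat) (d m : nat)
    (E' : {set {set 'I_n}}) (s' t' : 'I_n) (E : {set {set 'I_n}}) (s t : 'I_n) : Prop :=
  (forall i, 1 <= i <= m -> Npath d E s t i <= Npath d E' s' t' i) /\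
  (exists j, 1 <= j <= m /\ Npath d E s t j < Npath d E' s' t' j).

From mathcomp Require Import all_boot.
Set Implicit Arguments. Unset Strict Implicit. Unset Printing Implicit Defensive.

(* A switch replaces one edge e of a two-terminal graph by a non-edge f.
   If every short s-t walk through e can be traded for one through f, then
   sending each 3-pathset F containing e to f |: psi (F :\ e) (and keeping the
   other pathsets) is injective, so no N_i^3 decreases; a pathset f |: W not in
   the image makes the new graph 3-stronger.

   First one switch makes the graph 3-stronger while leaving s, t adjacent: if
   they are not adjacent, any edge is traded for st. Otherwise some vertex
   separates them (is adjacent to exactly one of them). If a separator x, say
   with s ~ x and not t ~ x, has a neighbour z outside {s, t}, trade xz for tx.
   Otherwise every separator is a pendant vertex at s or at t, so its edge lies
   on no short walk; fix one, x at s, and trade for tx another separator edge,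
   or an edge ab between non-terminals (rerouting s-a-b-t through s-x-t), or,
   when the graph consists of st, sx and paths s-c-t only, trade sx for c1c2
   between two such c (m >= 5 provides two of them).

   Then the separators are removed one at a time by switches that keep st and
   never decrease any N_i^3: trade xz for tx as above, or, for a pendant x, trade
   sx for xz with any vertex z outside {s, t, x} (n >= 5 provides one). With no
   separator left, s and t are true twins. *)

Section TwoTerminal.
Variable n : nat.
Local Notation V := 'I_n.
Local Notation edges := {set {set V}}.
Implicit Types (E F W : edges) (a b c d s t u v x y z w : V) (e f g : {set V}).

Lemma set2C a b : [set a; b] = [set b; a].
Proof. by rewrite setUC. Qed.

Lemma set2_inj a b c d : [set a; b] = [set c; d] ->
  (a = c /\ b = d) \/ (a = d /\ b = c).
Proof.
move=> eq_ab_cd.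
have : [&& a \in [set c; d], b \in [set c; d], c \in [set a; b] & d \in [set a; b]].
  by rewrite eq_ab_cd !set21 !set22 -eq_ab_cd set21 set22.
rewrite !in_set2.
by case/and4P=> /orP[]/eqP ea /orP[]/eqP eb /orP[]/eqP ec /orP[]/eqP ed; subst; auto.
Qed.

Lemma is_graphS E F : is_graph E -> F \subset E -> is_graph F.
Proof. by move=> gE /subsetP sFE g /sFE /gE. Qed.

Lemma adjC F u v : adj F u v = adj F v u.
Proof. by rewrite /adj set2C. Qed.

Lemma adj_setU1 g F u v : adj (g |: F) u v = ([set u; v] == g) || adj F u v.
Proof. by rewrite /adj in_setU1. Qed.

Lemma adj_set1 g u v : adj [set g] u v = ([set u; v] == g).
Proof. by rewrite /adj in_set1. Qed.

Lemma adjS F E u v : F \subset E -> adj F u v -> adj E u v.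
Proof. by move=> /subsetP sFE /sFE. Qed.

Lemma adj_neq F u v : is_graph F -> adj F u v -> u != v.
Proof. by move=> gF /gF; rewrite cards2; case: (u != v). Qed.

(** * Short walks *)

(* A walk rather than a path: a shortest walk is a path (has_short_path3P). *)
Definition walk3 F s t : Prop :=
  [\/ adj F s t, exists y, adj F s y /\ adj F y t
    | exists y w, [/\ adj F s y, adj F y w & adj F w t]].

Lemma walk3C F s t : walk3 F s t -> walk3 F t s.
Proof.
case=> [st | [y [sy yt]] | [y [w [sy yw wt]]]].
- by apply: Or31; rewrite adjC.
- by apply: Or32; exists y; rewrite adjC yt adjC sy.
- by apply: Or33; exists w, y; rewrite adjC wt adjC yw adjC sy.
Qed.

Lemma walk3S F F' s t : F \subset F' -> walk3 F s t -> walk3 F' s t.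
Proof.
move=> /adjS sub.
case=> [st | [y [sy yt]] | [y [w [sy yw wt]]]].
- by apply: Or31; apply: sub.
- by apply: Or32; exists y; split; apply: sub.
- by apply: Or33; exists y, w; split; apply: sub.
Qed.

Lemma walk3U g F s t : walk3 F s t -> walk3 (g |: F) s t.
Proof. exact/walk3S/subsetUr. Qed.

Lemma has_short_path_adj F s t : s != t -> adj F s t -> has_short_path 3 F s t.
Proof.
move=> st adj_st; apply/existsP; exists (Ordinal (isT : 1 < 4)); apply/existsP.
by exists [tuple t]; rewrite /= adj_st inE st eqxx.
Qed.

Lemma has_short_path3P F s t : s != t -> is_graph F ->
  reflect (walk3 F s t) (has_short_path 3 F s t).
Proof.
move=> st gF; apply: (iffP idP).
  case/existsP=> k /existsP[p /and3P[pth uniq_p /eqP last_p]].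
  move: k p pth uniq_p last_p => [[|[|[|[|k]]]] lt_k4] //=.
  - by case=> [[]] // _ _ _ /= ts; rewrite ts eqxx in st.
  - by case=> [[|v1 []]] // _ /= /andP[s1 _] _ <-; apply: Or31.
  - case=> [[|v1 [|v2 []]]] // _ /= /and3P[s1 v12 _] _ <-.
    by apply: Or32; exists v1.
  - case=> [[|v1 [|v2 [|v3 []]]]] // _ /= /and4P[s1 v12 v23 _] _ <-.
    by apply: Or33; exists v1, v2.
case=> [adj_st | [y [sy yt]] | [y [w [sy yw wt]]]]; first exact: has_short_path_adj.
- apply/existsP; exists (Ordinal (isT : 2 < 4)); apply/existsP.
  exists [tuple y; t].
  by rewrite /= sy yt !inE negb_or (adj_neq gF sy) (adj_neq gF yt) st eqxx.
- have [ws|ws] := eqVneq w s; first by rewrite ws in wt; apply: has_short_path_adj.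
  have [yt|ty] := eqVneq y t; first by rewrite yt in sy; apply: has_short_path_adj.
  apply/existsP; exists (Ordinal (isT : 3 < 4)); apply/existsP.
  exists [tuple y; w; t].
  rewrite /= sy yw wt !inE !negb_or (adj_neq gF sy) (adj_neq gF yw) (adj_neq gF wt).
  by rewrite st eq_sym ws ty eqxx.
Qed.

Lemma Npath3C E s t i : s != t -> is_graph E -> Npath 3 E s t i = Npath 3 E t s i.
Proof.
move=> st gE; apply: eq_card => F; rewrite !inE.
case sFE: (F \subset E) => //=; congr (_ && _).
have gF := is_graphS gE sFE; have ts : t != s by rewrite eq_sym.
by apply/(has_short_path3P st gF)/(has_short_path3P ts gF); apply: walk3C.
Qed.

(** * Switching one edge *)

Definition Npath3_le E E' s t := forall i, Npath 3 E s t i <= Npath 3 E' s t i.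

Lemma Npath3_le_trans E1 E2 E3 s t :
  Npath3_le E1 E2 s t -> Npath3_le E2 E3 s t -> Npath3_le E1 E3 s t.
Proof. by move=> le12 le23 i; apply: leq_trans (le12 i) (le23 i). Qed.

Lemma Npath3_leC E E' s t : s != t -> is_graph E -> is_graph E' ->
  Npath3_le E E' t s -> Npath3_le E E' s t.
Proof. by move=> st gE gE' le i; rewrite !(Npath3C _ st) //. Qed.

Lemma strongerC m E E' s t : s != t -> is_graph E -> is_graph E' ->
  stronger 3 m E' t s E t s -> stronger 3 m E' s t E s t.
Proof.
move=> st gE gE' [le [j [jm lt]]]; split.
  by move=> i im; rewrite !(Npath3C _ st) //; apply: le.
by exists j; rewrite !(Npath3C _ st).
Qed.

Lemma stronger_le_trans m E E1 E2 s t :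
  stronger 3 m E1 s t E s t -> Npath3_le E1 E2 s t -> stronger 3 m E2 s t E s t.
Proof.
move=> [le [j [jm lt]]] le12; split; first by move=> i im; apply: leq_trans (le i im) _.
by exists j; split => //; apply: leq_trans lt _.
Qed.

Lemma set1_subD1 E e g : g \in E -> g != e -> [set g] \subset E :\ e.
Proof. by move=> gE ge; rewrite sub1set !inE ge. Qed.

Definition switch e f E : edges := f |: (E :\ e).

Lemma is_graph_switch E e f : is_graph E -> #|f| = 2 -> is_graph (switch e f E).
Proof. by move=> gE f2 g; rewrite !inE => /orP[/eqP -> | /andP[_ /gE]]. Qed.

Lemma card_switch E e f : e \in E -> f \notin E -> #|switch e f E| = #|E|.
Proof.
move=> eE fE; rewrite cardsU1 (cardsD1 e E) eE !inE negb_and fE orbT.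
by rewrite add1n.
Qed.

Lemma adj_switch E e f u v :
  adj (switch e f E) u v = ([set u; v] == f) || ([set u; v] != e) && adj E u v.
Proof. by rewrite /adj !inE. Qed.

Lemma adj_switch_other E e f u v : [set u; v] != e -> [set u; v] != f ->
  adj (switch e f E) u v = adj E u v.
Proof. by move=> ne /negbTE nf; rewrite adj_switch ne nf. Qed.

Section Switching.
Variables (E : edges) (s t : V) (e f : {set V}) (psi : edges -> edges).
Hypotheses (st : s != t) (gE : is_graph E) (fE : f \notin E) (f2 : #|f| = 2).
Hypothesis psiP : forall F, F \subset E :\ e -> walk3 (e |: F) s t ->
  [/\ psi F \subset E :\ e, #|psi F| = #|F| & walk3 (f |: psi F) s t].
Hypothesis psi_inj : forall F1 F2, F1 \subset E :\ e -> F2 \subset E :\ e ->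
  walk3 (e |: F1) s t -> walk3 (e |: F2) s t -> psi F1 = psi F2 -> F1 = F2.

Let E' := switch e f E.
Let gE' : is_graph E' := is_graph_switch gE f2.
Let Phi F := if e \in F then f |: psi (F :\ e) else F.
Let A i := [set F in powerset E | (#|F| == i) && has_short_path 3 F s t].
Let B i := [set F in powerset E' | (#|F| == i) && has_short_path 3 F s t].

Lemma notin_subD1 F : F \subset E :\ e -> f \notin F.
Proof. by move=> /subsetP sFE; apply: contraNN fE => /sFE /setD1P[]. Qed.

Lemma mem_A i F : F \in A i -> [/\ F \subset E, #|F| = i & walk3 F s t].
Proof.
rewrite !inE => /andP[sFE /andP[/eqP <- path_F]]; split => //.
exact: (has_short_path3P st (is_graphS gE sFE)).
Qed.

Lemma in_B i F : F \subset E' -> #|F| = i -> walk3 F s t -> F \in B i.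
Proof.
move=> sFE' <- wF; rewrite !inE sFE' eqxx /=.
exact/(has_short_path3P st (is_graphS gE' sFE')).
Qed.

Lemma walk3_D1 F : e \in F -> walk3 F s t -> walk3 (e |: (F :\ e)) s t.
Proof. by move=> eF; rewrite setD1K. Qed.

Lemma Phi_in i : {in A i, forall F, Phi F \in B i}.
Proof.
move=> F /mem_A[sFE <- wF]; rewrite /Phi.
have sFeE : F :\ e \subset E :\ e by apply: setSD.
case eF: (e \in F).
  have [spsi card_psi wpsi] := psiP sFeE (walk3_D1 eF wF).
  apply: in_B => //; first exact: setUS.
  by rewrite cardsU1 (notin_subD1 spsi) card_psi (cardsD1 e F) eF.
apply: in_B => //; apply/subsetP => g gF; rewrite !inE (subsetP sFE _ gF) andbT.
by apply/orP; right; apply: contraTneq gF => ->; rewrite eF.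
Qed.

Lemma Phi_inj i : {in A i &, injective Phi}.
Proof.
move=> F1 F2 /mem_A[sFE1 _ wF1] /mem_A[sFE2 _ wF2]; rewrite /Phi.
have sF1 : F1 :\ e \subset E :\ e by apply: setSD.
have sF2 : F2 :\ e \subset E :\ e by apply: setSD.
have f_notin_sub (G : edges) : G \subset E -> f \notin G.
  by move=> /subsetP sGE; apply: contraNN fE => /sGE.
case eF1: (e \in F1); case eF2: (e \in F2) => // eq_Phi.
- have [s1 _ _] := psiP sF1 (walk3_D1 eF1 wF1).
  have [s2 _ _] := psiP sF2 (walk3_D1 eF2 wF2).
  rewrite -(setD1K eF1) -(setD1K eF2); congr (_ |: _).
  apply: (psi_inj sF1 sF2 (walk3_D1 eF1 wF1) (walk3_D1 eF2 wF2)).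
  by rewrite -(setU1K (notin_subD1 s1)) eq_Phi (setU1K (notin_subD1 s2)).
- by move: (f_notin_sub _ sFE2); rewrite -eq_Phi setU11.
- by move: (f_notin_sub _ sFE1); rewrite eq_Phi setU11.
Qed.

Lemma Npath3_le_switch : Npath3_le E E' s t.
Proof.
move=> i; rewrite /Npath -/(A i) -/(B i) -(card_in_imset (@Phi_inj i)).
by apply/subset_leq_card/subsetP => _ /imsetP[F FA ->]; apply: Phi_in.
Qed.

Lemma stronger_switch W : e \in E -> W \subset E :\ e -> walk3 (f |: W) s t ->
  (forall F, F \subset E :\ e -> walk3 (e |: F) s t -> psi F <> W) ->
  stronger 3 #|E| E' s t E s t.
Proof.
move=> eE sWE wW psi_neq; split; first by move=> i _; apply: Npath3_le_switch.
exists #|W|.+1; split.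
  by rewrite ltn0Sn (cardsD1 e E) eE add1n ltnS (subset_leq_card sWE).
rewrite /Npath -/(A _) -/(B _) -(card_in_imset (@Phi_inj _)).
apply/proper_card/properP; split.
  by apply/subsetP => _ /imsetP[F FA ->]; apply: Phi_in.
exists (f |: W).
  by apply: in_B; [apply: setUS | rewrite cardsU1 (notin_subD1 sWE)|].
apply/imsetP => -[F /mem_A[sFE _ wF]]; rewrite /Phi.
case eF: (e \in F) => eq_W.
  have sFeE : F :\ e \subset E :\ e by apply: setSD.
  have [spsi _ _] := psiP sFeE (walk3_D1 eF wF).
  apply: (psi_neq _ sFeE (walk3_D1 eF wF)).
  by rewrite -(setU1K (notin_subD1 spsi)) -eq_W (setU1K (notin_subD1 sWE)).
by move: fE; rewrite (subsetP sFE) // -eq_W setU11.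
Qed.

End Switching.

Section SwitchingWalks.
Variables (E : edges) (s t : V) (e f : {set V}).
Hypotheses (st : s != t) (gE : is_graph E) (fE : f \notin E) (f2 : #|f| = 2).
Hypothesis walk_ef : forall F, F \subset E :\ e -> walk3 (e |: F) s t -> walk3 (f |: F) s t.

Lemma Npath3_le_switch_id : Npath3_le E (switch e f E) s t.
Proof. by apply: (@Npath3_le_switch _ _ _ _ _ id) => // F *; split => //; apply: walk_ef. Qed.

Lemma stronger_switch_id W : e \in E -> W \subset E :\ e ->
  walk3 (f |: W) s t -> ~ walk3 (e |: W) s t -> stronger 3 #|E| (switch e f E) s t E s t.
Proof.
move=> eE sWE wfW nweW.
apply: (@stronger_switch E s t e f id st gE fE f2 _ _ W) => //.
- by move=> F *; split => //; apply: walk_ef.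
- by move=> F _ weF eq_FW; apply: nweW; rewrite -eq_FW.
Qed.

End SwitchingWalks.

Definition Npath3_improved E E1 s t :=
  [/\ is_graph E1, #|E1| = #|E|, adj E1 s t & Npath3_le E E1 s t].

Lemma adj_switch_kept E e f s t : adj E s t -> e != [set s; t] -> adj (switch e f E) s t.
Proof. by move=> adj_st e_st; rewrite adj_switch adj_st andbT [_ == e]eq_sym e_st orbT. Qed.

Lemma improved_switch E s t e f : is_graph E -> adj E s t -> e \in E -> f \notin E ->
  #|f| = 2 -> e != [set s; t] ->
  Npath3_le E (switch e f E) s t -> Npath3_improved E (switch e f E) s t.
Proof.
move=> gE adj_st eE fE f2 e_st le.
by split; [exact: is_graph_switch | exact: card_switch | exact: adj_switch_kept |].
Qed.

Definition strictly_improved E E1 s t :=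
  [/\ is_graph E1, #|E1| = #|E|, adj E1 s t & stronger 3 #|E| E1 s t E s t].

Lemma strictly_improvedC E E1 s t : s != t -> is_graph E ->
  strictly_improved E E1 t s -> strictly_improved E E1 s t.
Proof.
move=> st gE [gE1 card_E1 ts str]; split => //; first by rewrite adjC.
exact: strongerC.
Qed.

Lemma strictly_improved_switch E s t e f : is_graph E -> adj E s t -> e \in E ->
  f \notin E -> #|f| = 2 -> e != [set s; t] ->
  stronger 3 #|E| (switch e f E) s t E s t -> strictly_improved E (switch e f E) s t.
Proof.
move=> gE adj_st eE fE f2 e_st str.
by split; [exact: is_graph_switch | exact: card_switch | exact: adj_switch_kept |].
Qed.

(** * Case analysis of short walks *)

Lemma adj_set2U c d F : adj ([set c; d] |: F) c d.
Proof. by rewrite adj_setU1 eqxx. Qed.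

Lemma adj_set2U_sym c d F : adj ([set c; d] |: F) d c.
Proof. by rewrite adjC adj_set2U. Qed.

Lemma adjU1r g F u v : adj F u v -> adj (g |: F) u v.
Proof. by rewrite adj_setU1 => ->; rewrite orbT. Qed.

Lemma adj_set2UP c d F u v : adj ([set c; d] |: F) u v ->
  [\/ u = c /\ v = d, u = d /\ v = c | adj F u v].
Proof.
rewrite adj_setU1 => /orP[/eqP /set2_inj[[-> ->]|[-> ->]] | ?]; by constructor.
Qed.

Lemma adj_set1P c d u v : adj [set [set c; d]] u v -> (u = c /\ v = d) \/ (u = d /\ v = c).
Proof. by rewrite adj_set1 => /eqP /set2_inj. Qed.

Lemma adjD1 F e u v : adj (F :\ e) u v -> adj F u v.
Proof. exact/adjS/subsetDl. Qed.

Ltac discharge_neq := try match goal with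
  | H : is_true (?a != ?a) |- _ => by move: (H); rewrite eqxx
  | H : is_true ([set ?a; ?b] != [set ?b; ?a]) |- _ => by move: (H); rewrite set2C eqxx
  | H : is_true (?a != ?b), H' : ?a = ?b |- _ => by move: (H); rewrite H' eqxx
  | H : is_true (?a != ?b), H' : ?b = ?a |- _ => by move: (H); rewrite H' eqxx
  | H : is_true ?b, H' : is_true (~~ ?b) |- _ => by move: (H'); rewrite H
  | H : is_true (adj (_ :\ [set ?u; ?v]) ?u ?v) |- _ => by move: H; rewrite /adj !inE eqxx
  | H : is_true (adj (_ :\ [set ?u; ?v]) ?v ?u) |- _ =>
      by move: H; rewrite /adj !inE set2C eqxx
  end.
Ltac case_adj H := case/adj_set2UP: H => [[? ?]|[? ?]|H]; subst; discharge_neq.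
Ltac case_adj1 H := case/adj_set1P: H => [[? ?]|[? ?]]; subst; discharge_neq.
Ltac strip_adjD1 :=
  repeat match goal with H : is_true (adj (_ :\ _) _ _) |- _ => move/adjD1: H => H end.
Ltac walk3_by_assumption := solve [apply: Or31; assumption
  | apply: Or32; eexists; split; eassumption
  | apply: Or33; do 2 eexists; split; eassumption].
Ltac set2_neq := apply/eqP => /set2_inj[[? ?]|[? ?]]; subst; discharge_neq.

Lemma walk3_redirect_tx E F s t x z : x != s -> x != t -> z != s -> z != t ->
  ~~ adj E t x -> F \subset E ->
  walk3 ([set x; z] |: F) s t -> walk3 ([set t; x] |: F) s t.
Proof.
move=> xs xt zs zt ntx sFE.
case=> [H | [y [H1 H2]] | [y [w [H1 H2 H3]]]].
- by case_adj H; apply/Or31/adjU1r.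
- by case_adj H1; case_adj H2; apply/walk3U/Or32; exists y.
- case_adj H1; case_adj H3; case_adj H2.
  + by apply: Or32; exists x; split; [apply: adjU1r | apply: adj_set2U_sym].
  + by move: ntx; rewrite adjC (adjS sFE H3).
  + by apply/walk3U/Or33; exists y, w.
Qed.

Definition pendant E s x := forall v, adj E x v -> v = s.

Lemma walk3_pendant E F s t y : s != t -> is_graph E -> y != s -> y != t ->
  pendant E s y -> F \subset E :\ [set s; y] ->
  walk3 ([set s; y] |: F) s t -> walk3 F s t.
Proof.
move=> st gE ys yt py sF.
have sFE : F \subset E := subset_trans sF (subsetDl _ _).
have nty : ~~ adj E t y by apply: contraNN st; rewrite adjC => /py ->.
have gF := is_graphS gE sFE.
case=> [H | [x [H1 H2]] | [x [w [H1 H2 H3]]]].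
- by case_adj H; apply: Or31.
- case_adj H1; case_adj H2.
  + by move: nty; rewrite adjC (adjS sFE H2).
  + by apply: Or32; exists x.
- case_adj H1.
  + case_adj H2.
    * by case_adj H3; apply: Or31.
    * have ws := py _ (adjS sFE H2); subst.
      by case_adj H3; apply: Or31.
  + case_adj H2.
    * by move: (adj_neq gF H1); rewrite eqxx.
    * by move: (subsetP sF _ H1); rewrite !inE eqxx.
    * by case_adj H3; apply: Or33; exists x, w.
Qed.

Lemma walk3_inner_edge F s t a b : a != s -> a != t -> b != s -> b != t ->
  walk3 ([set a; b] |: F) s t ->
  [\/ walk3 F s t, adj F s a /\ adj F b t | adj F s b /\ adj F a t].
Proof.
move=> a_s a_t b_s b_t.
case=> [H | [x [H1 H2]] | [x [w [H1 H2 H3]]]].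
- by case_adj H; apply/Or31/Or31.
- by case_adj H1; case_adj H2; apply/Or31/Or32; exists x.
- case_adj H1; case_adj H3; case_adj H2; [apply: Or32 | apply: Or33 | ] => //.
  by apply/Or31/Or33; exists x, w.
Qed.

Lemma walk3_set1 s t a b : s != t -> walk3 [set [set a; b]] s t -> [set a; b] = [set s; t].
Proof.
move=> st.
case=> [H | [x [H1 H2]] | [x [w [H1 H2 H3]]]].
- by case_adj1 H; rewrite set2C.
- by case_adj1 H1; case_adj1 H2.
- by case_adj1 H1; case_adj1 H3; rewrite set2C.
Qed.

Lemma not_walk3_pair E s t x a b : s != t -> x != s -> x != t ->
  [set a; b] \in E -> [set a; b] != [set s; t] -> ~~ adj E t x ->
  ~ walk3 ([set a; b] |: [set [set s; x]]) s t.
Proof.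
move=> st xs xt abE ab_st ntx.
case=> [H | [y [H1 H2]] | [y [w [H1 H2 H3]]]].
- by case_adj H; case_adj1 H.
- case_adj H2; case_adj H1; try case_adj1 H1; try case_adj1 H2.
  + by move: ntx; rewrite /adj set2C abE.
  + by move: ntx; rewrite /adj abE.
- case_adj H3; case_adj H1; try case_adj1 H1; try case_adj1 H3; case_adj H2;
    try case_adj1 H2; by move: ntx; rewrite /adj ?set2C abE.
Qed.

Lemma not_walk3_triple s t x c1 c2 : s != t -> x != s -> x != t ->
  c1 != s -> c1 != t -> c2 != s -> c2 != t -> c1 != c2 -> x != c1 -> x != c2 ->
  ~ walk3 ([set s; x] |: ([set s; c1] |: [set [set c2; t]])) s t.
Proof.
move=> st xs xt c1s c1t c2s c2t c12 xc1 xc2.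
case=> [H | [y [H1 H2]] | [y [w [H1 H2 H3]]]].
- by case_adj H; case_adj H; case_adj1 H.
- by case_adj H2; try case_adj H2; try case_adj1 H2;
    case_adj H1; try case_adj H1; try case_adj1 H1.
- case_adj H3; try case_adj H3; try case_adj1 H3; case_adj H1; try case_adj H1;
    try case_adj1 H1; case_adj H2; try case_adj H2; try case_adj1 H2.
Qed.

(** * Switches that make the graph 3-stronger *)

Lemma walk3_tx F s t x : adj F s x -> walk3 ([set t; x] |: F) s t.
Proof. by move=> sxF; apply: Or32; exists x; rewrite adjU1r ?adj_set2U_sym. Qed.

Lemma strictly_improved_nonadjacent E s t : s != t -> is_graph E -> 0 < #|E| ->
  ~~ adj E s t -> exists E1, strictly_improved E E1 s t.
Proof.
move=> st gE /card_gt0P[g gE_g] nadj_st.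
have st2 : #|[set s; t]| = 2 by rewrite cards2 st.
have walk_st F : walk3 ([set s; t] |: F) s t by apply/Or31/adj_set2U.
exists (switch g [set s; t] E); split.
- exact: is_graph_switch.
- exact: card_switch.
- by rewrite adj_switch eqxx.
apply: (stronger_switch_id st gE nadj_st st2 (fun F _ _ => walk_st F) gE_g (sub0set _)).
  exact: walk_st.
have [a [b [_ g_ab]]] := cards2P _ (introT eqP (gE _ gE_g)).
rewrite setU0 g_ab => /(walk3_set1 st) ab_st.
by move: nadj_st; rewrite /adj -ab_st -g_ab gE_g.
Qed.

Section RedirectToT.
Variables (E : edges) (s t x : V).
Hypotheses (st : s != t) (gE : is_graph E) (adj_st : adj E s t).
Hypotheses (xs : x != s) (xt : x != t) (sx : adj E s x) (ntx : ~~ adj E t x).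

Lemma strictly_improved_to_tx a b : adj E a b ->
  [set a; b] != [set s; t] -> [set a; b] != [set s; x] ->
  (forall F, F \subset E :\ [set a; b] ->
     walk3 ([set a; b] |: F) s t -> walk3 ([set t; x] |: F) s t) ->
  strictly_improved E (switch [set a; b] [set t; x] E) s t.
Proof.
move=> ab ab_st ab_sx walk_tx.
have tx2 : #|[set t; x]| = 2 by rewrite cards2 eq_sym xt.
apply: strictly_improved_switch => //.
apply: (stronger_switch_id st gE ntx tx2 walk_tx ab (set1_subD1 sx _)).
- by rewrite eq_sym.
- by apply: walk3_tx; rewrite adj_set1 eqxx.
- exact: (not_walk3_pair st xs xt ab ab_st ntx).
Qed.

Lemma strictly_improved_useless a b : adj E a b ->
  [set a; b] != [set s; t] -> [set a; b] != [set s; x] ->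
  (forall F, F \subset E :\ [set a; b] -> walk3 ([set a; b] |: F) s t -> walk3 F s t) ->
  strictly_improved E (switch [set a; b] [set t; x] E) s t.
Proof.
move=> ab ab_st ab_sx useless; apply: strictly_improved_to_tx => // F sF wF.
exact/walk3U/useless.
Qed.

End RedirectToT.

Section PendantVertex.
Variables (E : edges) (s t x : V).
Hypotheses (st : s != t) (gE : is_graph E) (xs : x != s) (xt : x != t).
Hypotheses (sx : adj E s x) (px : pendant E s x).

Lemma pendant_not_adj_t : ~~ adj E t x.
Proof. by apply: contraNN st; rewrite adjC => /px ->. Qed.

(* Switching an inner edge ab for tx: a pathset that needs ab, through s-a-b-t,
   and avoids sx is sent to F - bt + sx, which reaches t through s-x-t. *)
Definition reroutable a b F :=
  [&& adj F s a, adj F b t, ~~ adj F s x & ~~ has_short_path 3 F s t].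

Definition reroute b F := [set s; x] |: (F :\ [set b; t]).

Section Reroute.
Variables (a b : V) (F : edges).
Hypothesis rF : reroutable a b F.

Lemma reroutable_not_walk3 : F \subset E -> ~ walk3 F s t.
Proof.
move=> sFE; case/and4P: rF => _ _ _ /negP npath wF; apply: npath.
exact/(has_short_path3P st (is_graphS gE sFE)).
Qed.

Lemma reroute_sub : a != s -> b != s -> F \subset E :\ [set a; b] ->
  reroute b F \subset E :\ [set a; b].
Proof.
move=> a_s b_s sF; rewrite subUset (subset_trans (subsetDl _ _) sF) andbT.
by apply: set1_subD1 => //; set2_neq.
Qed.

Lemma card_reroute : #|reroute b F| = #|F|.
Proof.
case/and4P: rF => _ btF nsxF _.
rewrite cardsU1 (cardsD1 [set b; t] F) (btF : [set b; t] \in F) !inE negb_and.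
by move: nsxF; rewrite /adj => ->; rewrite orbT.
Qed.

Lemma reroute_K : F = [set b; t] |: (reroute b F :\ [set s; x]).
Proof.
case/and4P: rF => _ btF nsxF _.
rewrite setU1K ?setD1K //.
by rewrite !inE negb_and; move: nsxF; rewrite /adj => ->; rewrite orbT.
Qed.

Lemma adj_reroute_sa : b != s -> adj (reroute b F) s a.
Proof.
case/and4P: rF => saF _ _ _ b_s.
apply: adjU1r; rewrite /adj !inE (saF : [set s; a] \in F) andbT; set2_neq.
Qed.

Lemma not_adj_reroute_sb : b != s -> F \subset E -> ~~ adj (reroute b F) s b.
Proof.
move=> b_s sFE; have nwF := reroutable_not_walk3 sFE.
case/and4P: rF => _ btF _ _.
apply/negP; rewrite /reroute => H; case_adj H.
  by move: (pendant_not_adj_t); rewrite adjC (adjS sFE btF).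
by apply: nwF; apply: Or32; exists b; rewrite (adjD1 H).
Qed.

(* The only short walk of [set a; b] |: F is s-a-b-t, whose edge bt was removed;
   the added edge sx leads to the dead end x. *)
Lemma not_walk3_reroute : a != s -> a != t -> b != s -> b != t -> F \subset E ->
  ~ walk3 ([set a; b] |: reroute b F) s t.
Proof.
move=> a_s a_t b_s b_t sFE; have nwF := reroutable_not_walk3 sFE.
have ntxF : ~~ adj F x t by apply: contraNN pendant_not_adj_t; rewrite adjC; apply: adjS.
have pxF : forall v, adj F x v -> v = s by move=> v /(adjS sFE) /px.
case/and4P: rF => saF btF nsxF _.
rewrite /reroute.
case=> [H | [y [H1 H2]] | [y [w [H1 H2 H3]]]].
- by case_adj H; case_adj H; apply/nwF/Or31/(adjD1 H).
- case_adj H1; case_adj H1; case_adj H2; case_adj H2; strip_adjD1;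
    discharge_neq; apply: nwF; walk3_by_assumption.
- case_adj H1; case_adj H1; case_adj H3; case_adj H3; case_adj H2; try case_adj H2;
    strip_adjD1; discharge_neq; try (apply: nwF; walk3_by_assumption).
  all: match goal with H : is_true (adj F x ?w) |- _ => have ? := pxF _ H end; subst.
  all: apply: nwF; walk3_by_assumption.
Qed.

End Reroute.

Section InnerEdge.
Variables c1 c2 : V.
Hypotheses (c1s : c1 != s) (c1t : c1 != t) (c2s : c2 != s) (c2t : c2 != t).
Hypothesis c12 : adj E c1 c2.

Definition reroute_inner F :=
  if reroutable c1 c2 F then reroute c2 F
  else if reroutable c2 c1 F then reroute c1 F else F.

Lemma reroute_innerP F : F \subset E :\ [set c1; c2] -> walk3 ([set c1; c2] |: F) s t ->
  [/\ reroute_inner F \subset E :\ [set c1; c2], #|reroute_inner F| = #|F|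
    & walk3 ([set t; x] |: reroute_inner F) s t].
Proof.
move=> sF wF; rewrite /reroute_inner.
have c21 := set2C c2 c1.
case r12: (reroutable c1 c2 F) => /=.
  split; [exact: reroute_sub | exact: card_reroute r12 | exact/walk3_tx/adj_set2U].
case r21: (reroutable c2 c1 F) => /=.
  split; [by rewrite -c21; apply: reroute_sub; rewrite // c21 | exact: card_reroute r21 |].
  exact/walk3_tx/adj_set2U.
split => //.
have gF := is_graphS gE (subset_trans sF (subsetDl _ _)).
have [/(has_short_path3P st gF) wF'|npath] := boolP (has_short_path 3 F s t).
  exact: walk3U.
have [sxF|nsxF] := boolP (adj F s x); first exact: walk3_tx.
case/walk3_inner_edge: wF => // [wF'|[saF btF]|[saF btF]].
- by case/negP: npath; apply/(has_short_path3P st gF).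
- by move: r12; rewrite /reroutable saF btF nsxF npath.
- by move: r21; rewrite /reroutable saF btF nsxF npath.
Qed.

(* A rerouted set has no short walk through c1c2, and the two reroutings differ
   at the edge s-c1, so the three branches of reroute_inner have disjoint images. *)
Lemma reroute_inner_inj F1 F2 :
  F1 \subset E :\ [set c1; c2] -> F2 \subset E :\ [set c1; c2] ->
  walk3 ([set c1; c2] |: F1) s t -> walk3 ([set c1; c2] |: F2) s t ->
  reroute_inner F1 = reroute_inner F2 -> F1 = F2.
Proof.
move=> sF1 sF2 wF1 wF2.
have sE1 : F1 \subset E := subset_trans sF1 (subsetDl _ _).
have sE2 : F2 \subset E := subset_trans sF2 (subsetDl _ _).
have c21 := set2C c2 c1.
rewrite /reroute_inner.
case q1: (reroutable c1 c2 F1); case q2: (reroutable c1 c2 F2).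
- by move=> eq_r; rewrite (reroute_K q1) eq_r -(reroute_K q2).
- case r2: (reroutable c2 c1 F2) => eq_r.
    move: (adj_reroute_sa q1 c2s); rewrite eq_r.
    by rewrite (negbTE (not_adj_reroute_sb r2 c1s sE2)).
  by case: (not_walk3_reroute q1 c1s c1t c2s c2t sE1); rewrite eq_r.
- case r1: (reroutable c2 c1 F1) => eq_r.
    move: (adj_reroute_sa q2 c2s); rewrite -eq_r.
    by rewrite (negbTE (not_adj_reroute_sb r1 c1s sE1)).
  by case: (not_walk3_reroute q2 c1s c1t c2s c2t sE2); rewrite -eq_r.
case r1: (reroutable c2 c1 F1); case r2: (reroutable c2 c1 F2) => // eq_r.
- by rewrite (reroute_K r1) eq_r -(reroute_K r2).
- by case: (not_walk3_reroute r1 c2s c2t c1s c1t sE1); rewrite c21 eq_r.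
- by case: (not_walk3_reroute r2 c2s c2t c1s c1t sE2); rewrite c21 -eq_r.
Qed.

Lemma stronger_inner_edge :
  stronger 3 #|E| (switch [set c1; c2] [set t; x] E) s t E s t.
Proof.
have xc1 : x != c1 by apply: contraNneq c2s => xc1; apply/eqP/px; rewrite xc1.
have xc2 : x != c2 by apply: contraNneq c1s => xc2; apply/eqP/px; rewrite xc2 adjC.
have ntx := pendant_not_adj_t.
apply: (@stronger_switch _ _ _ _ _ reroute_inner st gE ntx _ reroute_innerP
          reroute_inner_inj [set [set s; x]] c12).
- by rewrite cards2 eq_sym xt.
- by apply: set1_subD1 => //; set2_neq.
- by apply: walk3_tx; rewrite adj_set1 eqxx.
move=> F sF wF; rewrite /reroute_inner.
case r12: (reroutable c1 c2 F) => /= eq_F.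
  move: (adj_reroute_sa r12 c2s).
  by rewrite eq_F adj_set1 => /eqP /set2_inj[[_ ?]|[? ?]]; subst; discharge_neq.
case r21: (reroutable c2 c1 F) eq_F => /= eq_F.
  move: (adj_reroute_sa r21 c1s).
  by rewrite eq_F adj_set1 => /eqP /set2_inj[[_ ?]|[? ?]]; subst; discharge_neq.
apply: (@not_walk3_pair E s t x c1 c2) => //; last by rewrite -eq_F.
set2_neq.
Qed.

End InnerEdge.
End PendantVertex.

(** * Removing the separators *)

Definition separates E s t x := [&& x != s, x != t & adj E s x != adj E t x].

Definition nseparators E s t := #|[set x | separates E s t x]|.

Lemma separatesC E s t x : separates E s t x = separates E t s x.
Proof. by rewrite /separates; case: (x != s); case: (x != t) => //=; rewrite eq_sym. Qed.

Lemma nseparatorsC E s t : nseparators E s t = nseparators E t s.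
Proof. by apply: eq_card => x; rewrite !inE separatesC. Qed.

Lemma separatesP E s t x : separates E s t x ->
  [/\ x != s, x != t & (adj E s x && ~~ adj E t x) || (adj E t x && ~~ adj E s x)].
Proof. by case/and3P=> -> ->; case: (adj E s x); case: (adj E t x). Qed.

Lemma twins_of_no_separator E s t : adj E s t -> (forall x, ~~ separates E s t x) ->
  true_twins E s t.
Proof.
move=> st nsep; apply/setP => v; rewrite /closed_nbhd !inE.
have [->|vs] := eqVneq v s; first by rewrite adjC st orbT.
have [->|vt] := eqVneq v t; first by rewrite st.
by move: (nsep v); rewrite /separates vs vt /= negbK => /eqP.
Qed.

Lemma separator_of_not_twins E s t : adj E s t -> ~ true_twins E s t ->
  exists x, separates E s t x.
Proof.
move=> st ntw; case: (pickP (separates E s t)) => [x sep_x|nsep]; first by exists x.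
by case: ntw; apply: twins_of_no_separator => // x; rewrite nsep.
Qed.

Lemma nseparators_lt E E1 s t x : separates E s t x -> ~~ separates E1 s t x ->
  (forall y, y != x -> separates E1 s t y = separates E s t y) ->
  nseparators E1 s t < nseparators E s t.
Proof.
move=> sep_x nsep_x sep_y; apply/proper_card/properP; split; last by exists x; rewrite !inE.
apply/subsetP => y; rewrite !inE; have [-> //|yx] := eqVneq y x.
by rewrite sep_y.
Qed.

Section SeparatorStep.
Variables (E : edges) (s t x : V).
Hypotheses (st : s != t) (gE : is_graph E) (adj_st : adj E s t).
Hypotheses (xs : x != s) (xt : x != t) (sx : adj E s x) (ntx : ~~ adj E t x).

Lemma improved_redirect z : z != s -> z != t -> adj E x z ->
  Npath3_improved E (switch [set x; z] [set t; x] E) s t /\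
  nseparators (switch [set x; z] [set t; x] E) s t < nseparators E s t.
Proof.
move=> zs zt xz.
have tx2 : #|[set t; x]| = 2 by rewrite cards2 eq_sym xt.
have walk_tx F : F \subset E :\ [set x; z] ->
    walk3 ([set x; z] |: F) s t -> walk3 ([set t; x] |: F) s t.
  by move=> sF; apply: (walk3_redirect_tx xs xt zs zt ntx); apply: subset_trans sF (subsetDl _ _).
split.
- apply: improved_switch => //; first by set2_neq.
  exact: (Npath3_le_switch_id st gE ntx tx2 walk_tx).
- apply: (@nseparators_lt _ _ _ _ x).
  + by rewrite /separates xs xt sx (negbTE ntx).
  + by rewrite /separates xs xt /= (@adj_switch _ _ _ t x) eqxx adj_switch_other ?sx //; set2_neq.
  + by move=> y yx; rewrite /separates !adj_switch_other //; set2_neq.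
Qed.

Lemma improved_isolate z : z != s -> z != t -> z != x -> pendant E s x ->
  Npath3_improved E (switch [set s; x] [set x; z] E) s t /\
  nseparators (switch [set s; x] [set x; z] E) s t < nseparators E s t.
Proof.
move=> zs zt zx px.
have xz2 : #|[set x; z]| = 2 by rewrite cards2 eq_sym zx.
have xzE : [set x; z] \notin E by apply: contraNN zs => /px ->.
split.
  apply: improved_switch => //; first by set2_neq.
  apply: (Npath3_le_switch_id st gE xzE xz2) => F sF wF.
  exact/walk3U/(walk3_pendant st gE xs xt px sF).
apply: (@nseparators_lt _ _ _ _ x).
- by rewrite /separates xs xt sx (negbTE ntx).
- rewrite /separates.
  have -> : adj (switch [set s; x] [set x; z] E) s x = false.
    by rewrite adj_switch eqxx /= orbF; apply/negbTE; set2_neq.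
  have -> : adj (switch [set s; x] [set x; z] E) t x = false.
    by rewrite adj_switch_other ?(negbTE ntx) //; set2_neq.
  by rewrite !andbF.
- by move=> y yx; rewrite /separates !adj_switch_other //; set2_neq.
Qed.

Lemma improved_step : (exists z, [&& z != s, z != t & z != x]) ->
  exists E1, Npath3_improved E E1 s t /\ nseparators E1 s t < nseparators E s t.
Proof.
move=> [z0 /and3P[z0s z0t z0x]].
case: (pickP (fun z => [&& z != s, z != t & adj E x z])) => [z /and3P[zs zt xz] | nz].
  by have [? ?] := improved_redirect zs zt xz; eexists; split; eassumption.
have px : pendant E s x.
  move=> v xv; apply/eqP; apply: contraFT (nz v) => vs; rewrite vs xv andbT /=.
  by apply: contraNneq ntx => vt; rewrite adjC -vt.
by have [? ?] := improved_isolate z0s z0t z0x px; eexists; split; eassumption.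
Qed.

End SeparatorStep.

Lemma Npath3_improvedC E E1 s t : s != t -> is_graph E ->
  Npath3_improved E E1 t s -> Npath3_improved E E1 s t.
Proof.
move=> st gE [gE1 card_E1 ts le]; split => //; first by rewrite adjC.
exact: Npath3_leC.
Qed.

Lemma twins_by_switches E s t : s != t -> is_graph E -> adj E s t ->
  (forall x, exists z, [&& z != s, z != t & z != x]) ->
  exists E', [/\ is_graph E', #|E'| = #|E|, true_twins E' s t & Npath3_le E E' s t].
Proof.
move=> st + + avoid; have [k] := ubnP (nseparators E s t).
elim: k E => // k IH E lt_k gE adj_st.
case: (pickP (separates E s t)) => [x /separatesP[xs xt sep_x] | nsep]; last first.
  by exists E; split => //; apply: twins_of_no_separator => // y; rewrite nsep.
have ts : t != s by rewrite eq_sym.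
have [E1 [[gE1 card_E1 adj1 le1] lt1]] :
    exists E1, Npath3_improved E E1 s t /\ nseparators E1 s t < nseparators E s t.
  have [z /and3P[zs zt zx]] := avoid x.
  have adj_ts : adj E t s by rewrite adjC.
  case/orP: sep_x => /andP[adj_x nadj_x].
    by apply: (improved_step st gE adj_st xs xt adj_x nadj_x); exists z; rewrite zs zt zx.
  have z_ts : [&& z != t, z != s & z != x] by rewrite zs zt zx.
  have [E1 [imp lt]] := improved_step ts gE adj_ts xt xs adj_x nadj_x (ex_intro _ z z_ts).
  by exists E1; split; [apply: Npath3_improvedC | rewrite nseparatorsC (nseparatorsC E)].
have [|E' [gE' card_E' tw le']] := IH E1 _ gE1 adj1; first exact: leq_trans lt1 _.
exists E'; split => //; first by rewrite card_E'.
exact: Npath3_le_trans le1 le'.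
Qed.

(** * A 3-stronger switch for non-twin terminals *)

Lemma strictly_improved_outer E s t y z : s != t -> is_graph E -> adj E s t ->
  separates E s t y -> z != s -> z != t -> adj E y z ->
  exists E1, strictly_improved E E1 s t.
Proof.
move=> st gE adj_st /separatesP[ys yt sep_y] zs zt yz.
have ts : t != s by rewrite eq_sym.
case/orP: sep_y => /andP[adj_y nadj_y].
  eexists; apply: (strictly_improved_to_tx st gE adj_st ys yt adj_y nadj_y yz);
    [set2_neq | set2_neq | move=> F sF].
  exact/(walk3_redirect_tx ys yt zs zt nadj_y)/(subset_trans sF (subsetDl _ _)).
have adj_ts : adj E t s by rewrite adjC.
eexists; apply: strictly_improvedC => //.
apply: (strictly_improved_to_tx ts gE adj_ts yt ys adj_y nadj_y yz);
  [set2_neq | set2_neq | move=> F sF].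
exact/(walk3_redirect_tx yt ys zt zs nadj_y)/(subset_trans sF (subsetDl _ _)).
Qed.

Definition common_nbr E s t c := [&& c != s, c != t, adj E s c & adj E c t].

Section PendantSeparators.
Variables (E : edges) (s t x : V).
Hypotheses (st : s != t) (gE : is_graph E) (adj_st : adj E s t).
Hypotheses (xs : x != s) (xt : x != t) (sx : adj E s x) (ntx : ~~ adj E t x).
Hypothesis no_outer : forall y z, separates E s t y -> z != s -> z != t -> ~~ adj E y z.

Lemma separator_nbr y v : separates E s t y -> adj E y v -> v = s \/ v = t.
Proof.
move=> sep_y yv; have [->|vs] := eqVneq v s; first by left.
have [->|vt] := eqVneq v t; first by right.
by move: (no_outer sep_y vs vt); rewrite yv.
Qed.

Lemma separator_pendant_s y : separates E s t y -> ~~ adj E t y -> pendant E s y.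
Proof.
move=> sep_y nty v yv; case: (separator_nbr sep_y yv) => // vt.
by move: nty; rewrite adjC -vt yv.
Qed.

Lemma separator_pendant_t y : separates E s t y -> ~~ adj E s y -> pendant E t y.
Proof.
move=> sep_y nsy v yv; case: (separator_nbr sep_y yv) => // vs.
by move: nsy; rewrite adjC -vs yv.
Qed.

Lemma pendant_x : pendant E s x.
Proof. by apply: separator_pendant_s; rewrite // /separates xs xt sx (negbTE ntx). Qed.

Lemma strictly_improved_second_separator y : separates E s t y -> y != x ->
  exists E1, strictly_improved E E1 s t.
Proof.
move=> sep_y yx; have /separatesP[ys yt] := sep_y.
have ts : t != s by rewrite eq_sym.
case/orP=> /andP[adj_y nadj_y].
  eexists; apply: (strictly_improved_useless st gE adj_st xs xt sx ntx adj_y);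
    [set2_neq | set2_neq | move=> F sF].
  exact: (walk3_pendant st gE ys yt (separator_pendant_s sep_y nadj_y) sF).
eexists; apply: (strictly_improved_useless st gE adj_st xs xt sx ntx adj_y);
  [set2_neq | set2_neq | move=> F sF /walk3C wF].
exact/walk3C/(walk3_pendant ts gE yt ys (separator_pendant_t sep_y nadj_y) sF).
Qed.

Lemma strictly_improved_inner a b : a != s -> a != t -> b != s -> b != t -> adj E a b ->
  exists E1, strictly_improved E E1 s t.
Proof.
move=> a_s a_t b_s b_t ab; eexists.
apply: (@strictly_improved_switch _ _ _ [set a; b] [set t; x]) => //.
- by rewrite cards2 eq_sym xt.
- by set2_neq.
- exact: (stronger_inner_edge st gE xs xt sx pendant_x a_s a_t b_s b_t ab).
Qed.

Lemma strictly_improved_two_common_nbrs c1 c2 : common_nbr E s t c1 -> common_nbr E s t c2 ->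
  c1 != c2 -> ~~ adj E c1 c2 -> strictly_improved E (switch [set s; x] [set c1; c2] E) s t.
Proof.
case/and4P=> c1s c1t sc1 c1t'; case/and4P=> c2s c2t sc2 c2t' c12 n12.
have xc1 : x != c1 by apply: contraNneq ntx => ->; rewrite adjC.
have xc2 : x != c2 by apply: contraNneq ntx => ->; rewrite adjC.
apply: (@strictly_improved_switch _ _ _ [set s; x] [set c1; c2]) => //.
- by rewrite cards2 c12.
- by set2_neq.
apply: (@stronger_switch_id _ _ _ _ _ st gE n12 _ _ ([set s; c1] |: [set [set c2; t]])) => //.
- by rewrite cards2 c12.
- move=> F sF wF; apply: walk3U.
  exact: (walk3_pendant st gE xs xt pendant_x sF wF).
- rewrite subUset !set1_subD1 //; set2_neq.
- apply: Or33; exists c1, c2; split.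
  + by apply/adjU1r/adj_set2U.
  + exact: adj_set2U.
  + by rewrite !adj_setU1 adj_set1 eqxx !orbT.
- exact: not_walk3_triple.
Qed.

Section NoInnerEdge.
Hypothesis sep_x : forall y, separates E s t y -> y = x.
Hypothesis no_inner : forall a b, a != s -> a != t -> b != s -> b != t -> ~~ adj E a b.

Lemma card_le4_of_one_common_nbr c : (forall v, common_nbr E s t v -> v = c) -> #|E| <= 4.
Proof.
move=> only_c; set L := [:: [set s; t]; [set s; x]; [set s; c]; [set c; t]].
apply: leq_trans (card_size L); apply/subset_leq_card/subsetP => g gE_g.
have [u [v [_ g_uv]]] := cards2P _ (introT eqP (gE gE_g)).
have uv : adj E u v by rewrite /adj -g_uv.
have mem_s w : adj E s w -> [set s; w] \in L.
  move=> sw; have [->|wt] := eqVneq w t; first by rewrite !inE eqxx.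
  have ws := adj_neq gE sw; rewrite eq_sym in ws.
  case: (boolP (separates E s t w)) => [/sep_x -> | nsep]; first by rewrite !inE eqxx !orbT.
  suff -> : w = c by rewrite !inE eqxx !orbT.
  apply: only_c; move: nsep; rewrite /common_nbr /separates ws wt sw /= negbK.
  by rewrite adjC => /eqP <-.
have mem_t w : adj E w t -> [set w; t] \in L.
  move=> wt; have [->|ws] := eqVneq w s; first by rewrite !inE eqxx.
  have wt' := adj_neq gE wt.
  case: (boolP (separates E s t w)) => [/sep_x wx | nsep].
    by move: ntx; rewrite -wx adjC wt.
  suff -> : w = c by rewrite !inE eqxx !orbT.
  apply: only_c; move: nsep; rewrite /common_nbr /separates ws wt' (adjC _ t) wt /= negbK.
  by move=> /eqP ->.
rewrite g_uv; have [us|us] := eqVneq u s; first by rewrite us; apply: mem_s; rewrite -us.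
have [ut|ut] := eqVneq u t; first by rewrite set2C ut; apply: mem_t; rewrite -ut adjC.
have [vs|vs] := eqVneq v s; first by rewrite set2C vs; apply: mem_s; rewrite -vs adjC.
have [vt|vt] := eqVneq v t; first by rewrite vt; apply: mem_t; rewrite -vt.
by move: (no_inner us ut vs vt); rewrite uv.
Qed.

Lemma exists_two_common_nbrs : 5 <= #|E| ->
  exists c1 c2, [/\ common_nbr E s t c1, common_nbr E s t c2 & c1 != c2].
Proof.
move=> E5; case: (pickP (common_nbr E s t)) => [c1 dc1 | none]; last first.
  suff : #|E| <= 4 by rewrite leqNgt => /negP.
  by apply: (@card_le4_of_one_common_nbr x) => v; rewrite none.
case: (pickP (fun c => common_nbr E s t c && (c != c1))) => [c2 /andP[dc2 c21] | only].
  by exists c1, c2; rewrite eq_sym.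
suff : #|E| <= 4 by rewrite leqNgt => /negP.
apply: (@card_le4_of_one_common_nbr c1) => v dv; apply/eqP.
by move: (only v); rewrite dv => /negbT; rewrite negbK.
Qed.

End NoInnerEdge.

Lemma strictly_improved_pendant : 5 <= #|E| -> exists E1, strictly_improved E E1 s t.
Proof.
move=> E5.
case: (pickP (fun y => separates E s t y && (y != x))) => [y /andP[sep_y yx] | only_x].
  exact: (strictly_improved_second_separator sep_y yx).
case: (pickP (fun p : V * V => [&& p.1 != s, p.1 != t, p.2 != s, p.2 != t & adj E p.1 p.2]))
  => [[a b] /and5P[a_s a_t b_s b_t ab] | no_inner].
  exact: (strictly_improved_inner a_s a_t b_s b_t ab).
have {}no_inner a b : a != s -> a != t -> b != s -> b != t -> ~~ adj E a b.
  by move=> a_s a_t b_s b_t; move: (no_inner (a, b)); rewrite /= a_s a_t b_s b_t /= => ->.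
have {}only_x y : separates E s t y -> y = x.
  by move=> sep_y; apply/eqP; move: (only_x y); rewrite sep_y => /negbT; rewrite negbK.
have [c1 [c2 [dc1 dc2 c12]]] := exists_two_common_nbrs only_x no_inner E5.
eexists; apply: (strictly_improved_two_common_nbrs dc1 dc2 c12).
by case/and4P: dc1 => c1s c1t _ _; case/and4P: dc2 => c2s c2t _ _; apply: no_inner.
Qed.

End PendantSeparators.

Lemma strictly_improved_adjacent E s t : s != t -> is_graph E -> 5 <= #|E| ->
  adj E s t -> ~ true_twins E s t -> exists E1, strictly_improved E E1 s t.
Proof.
move=> st gE E5 adj_st ntw.
case: (pickP (fun p : V * V => [&& separates E s t p.1, p.2 != s, p.2 != t & adj E p.1 p.2]))
  => [[y z] /and4P[sep_y zs zt yz] | no_outer].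
  exact: (strictly_improved_outer st gE adj_st sep_y zs zt yz).
have {}no_outer y z : separates E s t y -> z != s -> z != t -> ~~ adj E y z.
  by move=> sep_y zs zt; move: (no_outer (y, z)); rewrite /= sep_y zs zt /= => ->.
have [x /separatesP[xs xt /orP[/andP[sx ntx] | /andP[tx nsx]]]] :=
  separator_of_not_twins adj_st ntw.
  exact: (strictly_improved_pendant st gE adj_st xs xt sx ntx no_outer E5).
have ts : t != s by rewrite eq_sym.
have adj_ts : adj E t s by rewrite adjC.
have no_outer' y z : separates E t s y -> z != t -> z != s -> ~~ adj E y z.
  by rewrite -separatesC => sep_y zt zs; apply: no_outer.
have [E1 imp] := strictly_improved_pendant ts gE adj_ts xt xs tx nsx no_outer' E5.
by exists E1; apply: strictly_improvedC.
Qed.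

Lemma strictly_improved_of_not_twins E s t : s != t -> is_graph E -> 5 <= #|E| ->
  ~ true_twins E s t -> exists E1, strictly_improved E E1 s t.
Proof.
move=> st gE E5 ntw; case: (boolP (adj E s t)) => [adj_st | nadj_st].
  exact: strictly_improved_adjacent.
by apply: strictly_improved_nonadjacent => //; apply: leq_trans E5.
Qed.

Lemma exists_avoiding3 a b c : 3 < n -> exists z, [&& z != a, z != b & z != c].
Proof.
move=> n4; case: (pickP (fun z => [&& z != a, z != b & z != c])) => [z az | none].
  by exists z.
suff : n <= 3 by rewrite leqNgt n4.
rewrite -[n]card_ord; apply: leq_trans (card_size [:: a; b; c]).
apply/subset_leq_card/subsetP => z _; move: (none z); rewrite !inE.
by case: (z == a); case: (z == b); case: (z == c).
Qed.

End TwoTerminal.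

Theorem lemma8 (n m : nat) : 5 <= n -> 5 <= m ->
  forall (E : {set {set 'I_n}}) (s t : 'I_n),
    is_graph E -> #|E| = m -> s != t -> ~ true_twins E s t ->
    exists (E' : {set {set 'I_n}}) (s' t' : 'I_n),
      [/\ is_graph E', #|E'| = m, s' != t', true_twins E' s' t'
        & stronger 3 m E' s' t' E s t].
Proof.
move=> n5 m5 E s t gE card_E st ntw; subst m.
have [E1 [gE1 card_E1 adj_st str]] := strictly_improved_of_not_twins st gE m5 ntw.
have avoid x : exists z, [&& z != s, z != t & z != x].
  by apply: exists_avoiding3; apply: leq_trans n5.
have [E2 [gE2 card_E2 tw le]] := twins_by_switches st gE1 adj_st avoid.
exists E2, s, t; split => //; first by rewrite card_E2.
exact: stronger_le_trans str le.
Qed.
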